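(* Let $v\ge 0$ and consider the problem $$\min_{y\in\mathbb{R}^{n^+}}\ \sum_{j=1}^{n^+} y_j^{1/\alpha}\quad\text{s.t.}\quad 0\le y_1\le y_2\le\cdots\le y_{n^+},\qquad \sum_{j=1}^{n^+} h^+_j y_j=v .$$ Let $J$ be the transitional index and $S:=\sum_{j'=1}^{J}h^+_{j'}$. Define $$Y:=\frac{v\,S^{\frac{\alpha}{1-\alpha}}}{S^{\frac{1}{1-\alpha}}+J^{\frac{\alpha}{1-\alpha}}\sum_{j'=J+1}^{n^+}(h^+_{j'})^{\frac{1}{1-\alpha}}}\ (\ge 0).$$ Then the optimal solution of this problem is $y^*\in\mathbb{R}^{n^+}$ given by $y^*_j=Y$ for $1\le j\le J$ and $y^*_j=\left(\frac{J h^+_j}{S}\right)^{\frac{\alpha}{1-\alpha}}Y$ for $J+1\le j\le n^+$.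
   Context: Fix $N\in\mathbb{N}$, $\alpha\in(0,1)$ and an integer $1\le n^+\le N$. A function $f:[0,1]\to\mathbb{R}$ is inverse S-shaped if it is strictly increasing, continuously differentiable, and there is $x_0\in[0,1]$ such that $f'$ is strictly decreasing on $[0,x_0]$ and strictly increasing on $[x_0,1]$. Let $W^+:[0,1]\to[0,1]$ be inverse S-shaped with $W^+(0)=0$, $W^+(1)=1$. Decision weights: $h^+_j:=W^+\!\left(\frac{n^+-j+1}{N}\right)-W^+\!\left(\frac{n^+-j}{N}\right)$ for $j=1,\dots,n^+$. The transitional index is $J:=\min\{j\in\{1,\dots,n^+\}: j\,h^+_{j+1}\ge \sum_{j'=1}^{j}h^+_{j'}\}$, with the convention $h^+_{n^++1}=\infty$. *)

(* R : realType, real powers via powR (a `^ x),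
   with the convention 0 `^ x = 0 for x <> 0. *)
From HB Require Import structures.
From mathcomp Require Import all_boot all_order all_algebra.
From mathcomp Require Import all_classical all_reals all_analysis.
Set Implicit Arguments. Unset Strict Implicit. Unset Printing Implicit Defensive.
Import Order.TTheory GRing.Theory Num.Theory.
Import numFieldNormedType.Exports.
Local Open Scope classical_set_scope.
Local Open Scope ring_scope.

Section Defs.
Variable R : realType.

Definition has_deriv01 (f : R -> R) (x d : R) : Prop :=
  (fun y => (f y - f x) / (y - x)) @ within (`[0, 1] `\ x) (nbhs x) --> d.

Definition inverse_S_shaped (f : R -> R) : Prop :=
  (forall x y, x \in `[0, 1] -> y \in `[0, 1] -> x < y -> f x < f y) /\
  exists f' : R -> R,
    (forall x, x \in `[0, 1] -> has_deriv01 f x (f' x)) /\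
    {within `[0, 1], continuous f'} /\
    exists x0, x0 \in `[0, 1] /\
      (forall x y, x \in `[0, x0] -> y \in `[0, x0] -> x < y -> f' y < f' x) /\
      (forall x y, x \in `[x0, 1] -> y \in `[x0, 1] -> x < y -> f' x < f' y).

Definition hplus (W : R -> R) (N np : nat) (j : nat) : R :=
  W ((np%:R - j%:R + 1) / N%:R) - W ((np%:R - j%:R) / N%:R).

Definition psum (h : nat -> R) (j : nat) : R := \sum_(1 <= i < j.+1) h i.

(* transitional index: the least j in {1..np} with j*h_{j+1} >= sum_{j'<=j} h_j',
   where h_{np+1} = +oo (so the condition always holds at j = np).
   The j-th element (0-based position j-1) of iota 1 np is j. *)
Definition transJ (h : nat -> R) (np : nat) : nat :=
  (find (fun j : nat => (np <= j)%N || (psum h j <= j%:R * h j.+1))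
        (iota 1 np)).+1.

Definition feasible (h : nat -> R) (np : nat) (v : R) (y : nat -> R) : Prop :=
  0 <= y 1%N /\ (forall j, (1 <= j < np)%N -> y j <= y j.+1) /\
  \sum_(1 <= j < np.+1) h j * y j = v.

Definition objective (alpha : R) (np : nat) (y : nat -> R) : R :=
  \sum_(1 <= j < np.+1) y j `^ (1 / alpha).

Definition Yval (alpha v : R) (h : nat -> R) (np J : nat) : R :=
  let S := psum h J in
  v * S `^ (alpha / (1 - alpha)) /
  (S `^ (1 / (1 - alpha)) +
   J%:R `^ (alpha / (1 - alpha)) *
     \sum_(J.+1 <= j < np.+1) h j `^ (1 / (1 - alpha))).

Definition ystar (alpha v : R) (h : nat -> R) (np J : nat) (j : nat) : R :=
  if (j <= J)%N then Yval alpha v h np J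
  else (J%:R * h j / psum h J) `^ (alpha / (1 - alpha)) * Yval alpha v h np J.

End Defs.

From HB Require Import structures.
From mathcomp Require Import all_boot all_order all_algebra.
From mathcomp Require Import all_classical all_reals all_analysis.
From mathcomp Require Import ring lra zify.
Import Order.TTheory GRing.Theory Num.Theory.
Import numFieldNormedType.Exports.
Local Open Scope classical_set_scope.
Local Open Scope ring_scope.
Set Implicit Arguments. Unset Strict Implicit.

(* Since W' first decreases and then increases, the mean value theorem shows
   that of three consecutive increments of W over cells of equal width the
   middle one is never the largest.  The decision weights are such increments
   read from right to left, so a descent h_{m+2} < h_{m+1} forces
   h_{m+1} < h_m.  Consequently the weights are nondecreasing beyond the
   transitional index J and satisfy J h_j >= S there, which makes y*
   nondecreasing, hence feasible.
   With p = 1/alpha, (y*_j)^(p-1) is proportional to 1 for j <= J and to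
   J h_j / S for j > J; using the budget constraint, the derivative of the
   objective at y* in the direction of a feasible y is a positive multiple of
   sum_{j <= J} (S - J h_j) (y_j - Y).  By minimality of J the partial sums of
   S - J h_j are nonpositive and vanish at J, so Abel summation against the
   nondecreasing y_j - Y shows this is nonnegative.  Strict convexity of
   t |-> t^p then yields optimality and uniqueness. *)

Section DerivativeOnUnitInterval.
Variable R : realType.

Lemma has_deriv01_cvg (f : R -> R) x d : has_deriv01 f x d ->
  f @ within (`[0, 1] `\ x) (nbhs x) --> f x.
Proof.
move=> fx.
have : (fun y => f x + (f y - f x) / (y - x) * (y - x))
    @ within (`[0, 1] `\ x) (nbhs x) --> f x + d * (x - x).
  apply: cvgD; first exact: cvg_cst.
  by apply: cvgM => //; apply: cvgB; [exact: cvg_within | exact: cvg_cst].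
rewrite subrr mulr0 addr0; apply: cvg_trans; apply: near_eq_cvg.
rewrite near_withinE; near=> y => -[_ /eqP yx].
by rewrite /= divfK ?subr_eq0 // addrC subrK.
Unshelve. all: by end_near. Qed.

Variables f f' : R -> R.
Hypothesis f'_deriv : forall x, x \in `[0, 1] -> has_deriv01 f x (f' x).

Lemma has_deriv01_continuous : {within [set` `[0, 1]], continuous f}.
Proof.
apply/subspace_continuousP => x /= x01 P /= fP.
have := has_deriv01_cvg (f'_deriv x01) fP.
rewrite /= !near_simpl /within /= !near_withinE /= => fxP.
near=> y => y01; rewrite /from_subspace /=.
have [->|yx] := eqVneq y x; first exact: nbhs_singleton fP.
move: y01 yx; near: y; apply: filterS fxP => y fyP y01 yx.
by apply: fyP; split => //; apply/eqP.
Unshelve. all: by end_near. Qed.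

Lemma has_deriv01_is_derive (x : R) : 0 < x < 1 -> is_derive x 1 f (f' x).
Proof.
move=> x01.
have x01' : x \in `[0, 1] by rewrite in_itv /=; case/andP: x01 => /ltW -> /ltW ->.
have shift_cvg : (fun t : R => t + x) @ 0^' --> within (`[0, 1] `\ x) (nbhs x).
  move=> P xP.
  have {}xP : \forall y \near x, (`[0, 1] `\ x) y -> P y := xP.
  have xP0 := proj1 (nbhs0P _ _) xP.
  have x_in : \forall y \near x, y \in `]0, 1[ by apply: near_in_itvoo; rewrite in_itv.
  have x_in0 := proj1 (nbhs0P _ _) x_in.
  change (\forall t \near 0^', P (t + x)); rewrite near_withinE.
  near=> t => t0; rewrite addrC.
  have : x + t \in `]0, 1[ by near: t.
  rewrite in_itv /= => /andP[/ltW t0' /ltW t1].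
  apply: (_ : (`[0, 1] `\ x) (x + t) -> P (x + t)); first by near: t.
  split; first by rewrite /= in_itv /= t0' t1.
  by move=> /eqP; rewrite -subr_eq0 addrC addKr; apply/negP.
have quot_cvg : (fun t : R => t^-1 *: ((f \o shift x) (t *: 1) - f x)) @ 0^' --> f' x.
  have -> : (fun t : R => t^-1 *: ((f \o shift x) (t *: 1) - f x)) =
            (fun y => (f y - f x) / (y - x)) \o (fun t => t + x).
    by apply/funext => t /=; rewrite /shift /= [t *: 1]mulr1 addrK mulrC.
  exact: cvg_comp shift_cvg (f'_deriv x01').
by apply: DeriveDef; [exact: cvgP quot_cvg | exact: cvg_lim quot_cvg].
Unshelve. all: by end_near. Qed.

Lemma has_deriv01_MVT (a b : R) : 0 <= a -> a < b -> b <= 1 ->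
  exists2 c, a < c < b & f b - f a = f' c * (b - a).
Proof.
move=> a0 ab b1.
have [c] : exists2 c, c \in `]a, b[ & f b - f a = f' c * (b - a).
  apply: MVT => //.
    move=> x; rewrite in_itv /= => /andP[ax xb].
    by apply: has_deriv01_is_derive; apply/andP; split; lra.
  apply: continuous_subspaceW has_deriv01_continuous.
  by move=> y /=; rewrite !in_itv /= => /andP[ay yb]; apply/andP; split; lra.
by rewrite in_itv /=; exists c.
Qed.

Variable x0 : R.
Hypothesis f'_decr :
  forall x y, x \in `[0, x0] -> y \in `[0, x0] -> x < y -> f' y < f' x.
Hypothesis f'_incr :
  forall x y, x \in `[x0, 1] -> y \in `[x0, 1] -> x < y -> f' x < f' y.

Lemma secant_decr (a b c e : R) :
  0 <= a -> a < b -> b <= c -> c < e -> e <= x0 -> x0 <= 1 ->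
  (f e - f c) * (b - a) < (f b - f a) * (e - c).
Proof.
move=> a0 ab bc ce ex0 x01.
have [s /andP[a_s s_b] ->] := has_deriv01_MVT a0 ab (ltac:(lra) : b <= 1).
have [t /andP[c_t t_e] ->] :=
  has_deriv01_MVT (ltac:(lra) : 0 <= c) ce (ltac:(lra) : e <= 1).
have : f' t < f' s by apply: f'_decr; rewrite ?in_itv /=; try (apply/andP; split); lra.
by move=> lt_st; rewrite [X in _ < X]mulrAC !ltr_pM2r ?subr_gt0.
Qed.

Lemma secant_incr (a b c e : R) :
  0 <= x0 -> x0 <= a -> a < b -> b <= c -> c < e -> e <= 1 ->
  (f b - f a) * (e - c) < (f e - f c) * (b - a).
Proof.
move=> x00 x0a ab bc ce e1.
have [s /andP[a_s s_b] ->] :=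
  has_deriv01_MVT (ltac:(lra) : 0 <= a) ab (ltac:(lra) : b <= 1).
have [t /andP[c_t t_e] ->] := has_deriv01_MVT (ltac:(lra) : 0 <= c) ce e1.
have : f' s < f' t by apply: f'_incr; rewrite ?in_itv /=; try (apply/andP; split); lra.
by move=> lt_st; rewrite [X in _ < X]mulrAC !ltr_pM2r ?subr_gt0.
Qed.

Lemma middle_increment_lt_max (a d : R) :
  0 <= x0 <= 1 -> 0 <= a -> 0 < d -> a + d + d + d <= 1 ->
  f (a + d + d) - f (a + d) <
    Num.max (f (a + d) - f a) (f (a + d + d + d) - f (a + d + d)).
Proof.
move=> /andP[x00 x01] a0 d0 a1.
set M := Num.max _ _.
have [M1 M3] : f (a + d) - f a <= M /\ f (a + d + d + d) - f (a + d + d) <= M.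
  by rewrite /M !le_max !lexx orbT.
have [w1 w2 w3] :
    [/\ a + d - a = d, a + d + d - (a + d) = d & a + d + d + d - (a + d + d) = d].
  by split; ring.
rewrite -(ltr_pM2r d0).
case: (leP (a + d + d) x0) => [hi_le_x0|x0_lt_hi].
  have := secant_decr a0 (ltac:(lra) : a < a + d) (lexx _)
    (ltac:(lra) : a + d < a + d + d) hi_le_x0 x01.
  have : (f (a + d) - f a) * d <= M * d by rewrite ler_pM2r.
  rewrite w1 w2; lra.
case: (leP x0 (a + d)) => [x0_le_lo|lo_lt_x0].
  have := secant_incr x00 x0_le_lo (ltac:(lra) : a + d < a + d + d) (lexx _)
    (ltac:(lra) : a + d + d < a + d + d + d) a1.
  have : (f (a + d + d + d) - f (a + d + d)) * d <= M * d by rewrite ler_pM2r.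
  rewrite w2 w3; lra.
have := secant_decr a0 (ltac:(lra) : a < a + d) (lexx _) lo_lt_x0 (lexx _) x01.
have := secant_incr x00 (lexx _) x0_lt_hi (lexx _)
  (ltac:(lra) : a + d + d < a + d + d + d) a1.
have : (f (a + d) - f a) * (x0 - (a + d)) <= M * (x0 - (a + d)) by rewrite ler_pM2r ?subr_gt0.
have : (f (a + d + d + d) - f (a + d + d)) * (a + d + d - x0) <= M * (a + d + d - x0).
  by rewrite ler_pM2r ?subr_gt0.
rewrite w1 w3; lra.
Qed.

End DerivativeOnUnitInterval.

Section DecisionWeights.
Variables (R : realType) (W : R -> R) (N np : nat).
Hypotheses (W_S : inverse_S_shaped W) (np_le_N : (np <= N)%N).

Lemma hplus_gt0 j : (1 <= j <= np)%N -> 0 < hplus W N np j.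
Proof.
case: W_S => W_incr _ /andP[j1 jnp].
have N0 : (0 : R) < N%:R by rewrite ltr0n; lia.
have [j1' jnp' npN'] : [/\ (1 : R) <= j%:R, (j%:R : R) <= np%:R & (np%:R : R) <= N%:R].
  by rewrite ler1n !ler_nat.
rewrite /hplus subr_gt0; apply: W_incr; rewrite ?in_itv /=.
- by rewrite divr_ge0 ?ler_pdivrMr //=; lra.
- by rewrite divr_ge0 ?ler_pdivrMr //=; lra.
- by rewrite ltr_pM2r ?invr_gt0 //; lra.
Qed.

Lemma hplus_descent m : (1 <= m)%N -> (m.+2 <= np)%N ->
  hplus W N np m.+2 < hplus W N np m.+1 -> hplus W N np m.+1 < hplus W N np m.
Proof.
case: W_S => _ [f' [f'_deriv [_ [x0 [x0_01 [f'_decr f'_incr]]]]]] m1 mnp.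
have N0 : (0 : R) < N%:R by rewrite ltr0n; lia.
have N_neq0 : (N%:R : R) != 0 by rewrite gt_eqF.
(* h_{m+2}, h_{m+1}, h_m are the increments of W over the consecutive cells
   [a, a + d], [a + d, a + 2d], [a + 2d, a + 3d] of the grid of mesh 1/N. *)
set a := (np%:R - m.+2%:R) / (N%:R : R); set d := (N%:R : R)^-1.
have E0 : (np%:R - m.+2%:R + 1) / N%:R = a + d by rewrite /a /d mulrDl mul1r.
have E1 : (np%:R - m.+1%:R) / N%:R = a + d by rewrite /a /d -!natr1; field.
have E2 : (np%:R - m.+1%:R + 1) / N%:R = a + d + d by rewrite /a /d -!natr1; field.
have E3 : (np%:R - m%:R) / N%:R = a + d + d by rewrite /a /d -!natr1; field.
have E4 : (np%:R - m%:R + 1) / N%:R = a + d + d + d by rewrite /a /d -!natr1; field.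
rewrite /hplus E0 E1 E2 E3 E4 -/a => incr.
have x0_01' : 0 <= x0 <= 1 by move: x0_01; rewrite in_itv.
have a_ge0 : 0 <= a by rewrite /a divr_ge0 // subr_ge0 ler_nat; lia.
have d_gt0 : 0 < d by rewrite invr_gt0.
have a_le1 : a + d + d + d <= 1.
  rewrite -E4 ler_pdivrMr // mul1r.
  have : (np%:R : R) <= N%:R by rewrite ler_nat.
  have : (1 : R) <= m%:R by rewrite ler1n.
  lra.
have := middle_increment_lt_max f'_deriv f'_decr f'_incr x0_01' a_ge0 d_gt0 a_le1.
by rewrite lt_max => /orP[|//]; lra.
Qed.
End DecisionWeights.

Section TransitionalIndex.
Variables (R : realType) (h : nat -> R) (np : nat).
Hypothesis np_gt0 : (0 < np)%N.

Let stop j := (np <= j)%N || (psum h j <= j%:R * h j.+1).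

Let has_stop : has stop (iota 1 np).
Proof. by apply/hasP; exists np; rewrite ?mem_iota /stop ?leqnn //; lia. Qed.

Let transJE : transJ h np = (find stop (iota 1 np)).+1.
Proof. by []. Qed.

Lemma transJ_bounds : (1 <= transJ h np <= np)%N.
Proof. by rewrite transJE; have := has_stop; rewrite has_find size_iota; lia. Qed.

Lemma transJ_before k : (1 <= k < transJ h np)%N -> k%:R * h k.+1 < psum h k.
Proof.
move=> /andP[k1 kJ]; have k_lt_np := transJ_bounds.
have kJ' : (k.-1 < find stop (iota 1 np))%N by move: kJ; rewrite transJE; lia.
have := before_find 0 kJ'.
rewrite nth_iota ?add1n ?prednK //; last lia.
by rewrite /stop => /negbT; rewrite negb_or -ltNge => /andP[_].
Qed.

Lemma transJ_stop : (transJ h np < np)%N ->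
  psum h (transJ h np) <= (transJ h np)%:R * h (transJ h np).+1.
Proof.
rewrite transJE => J_lt_np; have := nth_find 0 has_stop.
by rewrite nth_iota 1?ltnW // add1n /stop leqNgt J_lt_np.
Qed.

Hypothesis h_descent :
  forall m, (1 <= m)%N -> (m.+2 <= np)%N -> h m.+2 < h m.+1 -> h m.+1 < h m.

Lemma descent_prefix j : (j < np)%N -> h j.+1 < h j ->
  forall i, (1 <= i <= j)%N -> h i.+1 < h i /\ h j.+1 < h i.
Proof.
move=> jnp desc_j i /andP[i1 ij].
suff desc k : (k < j)%N -> h (j - k).+1 < h (j - k) /\ h j.+1 < h (j - k).
  by have := desc (j - i)%N; rewrite (_ : (j - (j - i) = i)%N); [apply; lia | lia].
elim: k => [|k IH] kj; first by rewrite subn0.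
have [] := IH (ltnW kj); rewrite (_ : (j - k = (j - k.+1).+1)%N); last lia.
move=> desc_next lt_next.
have : h (j - k.+1).+1 < h (j - k.+1) by apply: h_descent => //; lia.
by split => //; lra.
Qed.

Lemma transJ_tail_nondecr j : (transJ h np < j < np)%N -> h j <= h j.+1.
Proof.
set J := transJ h np => /andP[Jj jnp]; rewrite leNgt; apply/negP => desc_j.
have J_lt_np : (J < np)%N by lia.
have [descJ _] := descent_prefix jnp desc_j (i := J) (ltac:(have := transJ_bounds; lia)).
have : J%:R * h J.+1 < psum h J.
  have -> : J%:R * h J.+1 = \sum_(1 <= i < J.+1) h J.+1.
    by rewrite sumr_const_nat subn1 mulr_natl.
  apply: ltr_sum_nat => [|i /andP[i1 iJ]]; first by have := transJ_bounds; lia.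
  by apply: (descent_prefix J_lt_np descJ (i := i) _).2; lia.
by have := transJ_stop J_lt_np; lra.
Qed.

End TransitionalIndex.

Lemma abel_summation_ler (R : realDomainType) (e d : nat -> R) n :
  (forall k, (1 <= k < n)%N -> \sum_(1 <= j < k.+1) e j <= 0) ->
  (forall k, (1 <= k < n)%N -> d k <= d k.+1) ->
  (\sum_(1 <= j < n.+1) e j) * d n <= \sum_(1 <= j < n.+1) e j * d j.
Proof.
elim: n => [|n IH] e_le0 d_nondecr; first by rewrite !big_geq // !mul0r.
rewrite !(big_nat_recr n.+1) //=.
set E := \sum_(1 <= j < n.+1) e j.
have IHn : E * d n <= \sum_(1 <= j < n.+1) e j * d j.
  by apply: IH => k /andP[k1 kn]; [apply: e_le0 | apply: d_nondecr]; lia.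
have : E * (d n.+1 - d n) <= 0.
  case: n {IH IHn} @E e_le0 d_nondecr => [|n] E e_le0 d_nondecr.
    by rewrite /E big_geq // mul0r.
  by apply: mulr_le0_ge0; [apply: e_le0 | rewrite subr_ge0; apply: d_nondecr]; lia.
have -> : (E + e n.+1) * d n.+1 = E * (d n.+1 - d n) + E * d n + e n.+1 * d n.+1 by ring.
lra.
Qed.

Lemma psum_avg_antitone (R : realType) (h : nat -> R) J :
  (forall k, (1 <= k < J)%N -> k%:R * h k.+1 <= psum h k) ->
  forall k, (1 <= k <= J)%N -> k%:R * psum h J <= J%:R * psum h k.
Proof.
move=> hJ k /andP[k1 kJ].
suff avg m : (k <= m <= J)%N -> k%:R * psum h m <= m%:R * psum h k by apply: avg; lia.
elim: m => [|m IH] /andP[km mJ]; first lia.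
have [<-|km'] := eqVneq k m.+1; first exact: lexx.
have {}IH : k%:R * psum h m <= m%:R * psum h k by apply: IH; lia.
have hm : m%:R * h m.+1 <= psum h m by apply: hJ; lia.
have m_gt0 : (0 : R) < m%:R by rewrite ltr0n; lia.
have k_ge0 : (0 : R) <= k%:R by rewrite ler0n.
have hk : k%:R * h m.+1 <= psum h k.
  rewrite -(ler_pM2l m_gt0); apply: le_trans IH; rewrite mulrCA ler_wpM2l //.
rewrite /psum big_nat_recr //= -/(psum h m) -natr1.
have -> : k%:R * (psum h m + h m.+1) = k%:R * psum h m + k%:R * h m.+1 by ring.
have -> : (m%:R + 1) * psum h k = m%:R * psum h k + psum h k by ring.
lra.
Qed.

Section PowerConvexity.
Variable R : realType.

Lemma powR_MVT (p s t : R) : 0 < s -> s < t ->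
  exists2 c, s < c < t & t `^ p - s `^ p = p * c `^ (p - 1) * (t - s).
Proof.
move=> s0 st.
have [c] : exists2 c, c \in `]s, t[ & t `^ p - s `^ p = p * c `^ (p - 1) * (t - s).
  apply: (MVT (f := fun x => x `^ p) (df := fun c => p * c `^ (p - 1))) => // [x|].
    by rewrite in_itv /= => /andP[sx _]; apply: is_derive1_powR; lra.
  apply: derivable_within_continuous => x; rewrite in_itv /= => /andP[sx _].
  by have [] := is_derive1_powR p (ltac:(lra) : 0 < x).
by rewrite in_itv /=; exists c.
Qed.

Lemma powR_tangent_lt (p x y : R) : 1 < p -> 0 <= x -> 0 <= y -> x != y ->
  x `^ p + p * x `^ (p - 1) * (y - x) < y `^ p.
Proof.
move=> p1 x0 y0 xy.
have [p_neq0 p1_neq0] : p != 0 /\ p - 1 != 0 by split; apply/eqP; lra.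
have [x0'|x_neq0] := eqVneq x 0.
  have y_gt0 : 0 < y by rewrite lt_def y0 andbT; move: xy; rewrite x0' eq_sym.
  by rewrite x0' !powR0 // mulr0 mul0r add0r powR_gt0.
have xp : 0 < x by rewrite lt_def x_neq0.
have [->|y_neq0] := eqVneq y 0.
  have -> : p * x `^ (p - 1) * (0 - x) = - (p * x `^ p).
    by rewrite -(mulr_powRB1 x0 (_ : 0 < p)); [ring | lra].
  rewrite powR0 //.
  have : 0 < (p - 1) * x `^ p by rewrite mulr_gt0 ?powR_gt0 ?subr_gt0.
  lra.
have yp : 0 < y by rewrite lt_def y_neq0.
have dpow_lt (u v : R) : 0 < u -> u < v -> u `^ (p - 1) < v `^ (p - 1).
  by move=> u0 uv; apply: gt0_ltr_powR; rewrite ?nnegrE ?subr_gt0 //; lra.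
case: (ltgtP x y) xy => // [xy|yx] _.
  have [c /andP[xc cy] E] := powR_MVT p xp xy.
  have : p * x `^ (p - 1) * (y - x) < p * c `^ (p - 1) * (y - x).
    by rewrite ltr_pM2r ?subr_gt0 // ltr_pM2l ?dpow_lt //; lra.
  lra.
have [c /andP[yc cx] E] := powR_MVT p yp yx.
have : p * c `^ (p - 1) * (x - y) < p * x `^ (p - 1) * (x - y).
  by rewrite ltr_pM2r ?subr_gt0 // ltr_pM2l ?dpow_lt //; lra.
have -> : p * x `^ (p - 1) * (y - x) = - (p * x `^ (p - 1) * (x - y)) by ring.
lra.
Qed.

Variables (p : R) (n : nat) (x y : nat -> R).
Hypotheses (p_gt1 : 1 < p)
  (x_ge0 : forall j, (1 <= j <= n)%N -> 0 <= x j)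
  (y_ge0 : forall j, (1 <= j <= n)%N -> 0 <= y j)
  (tangent_ge0 : 0 <= \sum_(1 <= j < n.+1) x j `^ (p - 1) * (y j - x j)).

Let gap j := y j `^ p - (x j `^ p + p * x j `^ (p - 1) * (y j - x j)).

Let gap_ge0 j : (1 <= j < n.+1)%N -> 0 <= gap j.
Proof.
move=> jn; rewrite /gap; have [->|xy] := eqVneq (x j) (y j).
  by rewrite subrr mulr0 addr0 subrr.
by rewrite subr_ge0 ltW // powR_tangent_lt ?x_ge0 ?y_ge0.
Qed.

Let sum_gap_le :
  \sum_(1 <= j < n.+1) gap j <= \sum_(1 <= j < n.+1) y j `^ p - \sum_(1 <= j < n.+1) x j `^ p.
Proof.
have -> : \sum_(1 <= j < n.+1) gap j = \sum_(1 <= j < n.+1) y j `^ p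
    - \sum_(1 <= j < n.+1) x j `^ p - p * \sum_(1 <= j < n.+1) x j `^ (p - 1) * (y j - x j).
  by rewrite mulr_sumr -!sumrB; apply: eq_bigr => j _; rewrite /gap; ring.
by rewrite lerBlDr lerDl mulr_ge0 // (le_trans ler01 (ltW p_gt1)).
Qed.

Let sum_gap_ge0 : 0 <= \sum_(1 <= j < n.+1) gap j.
Proof. by rewrite big_nat; apply: sumr_ge0 => j; apply: gap_ge0. Qed.

Lemma sum_powR_ge_tangent : \sum_(1 <= j < n.+1) x j `^ p <= \sum_(1 <= j < n.+1) y j `^ p.
Proof. by rewrite -subr_ge0; apply: le_trans sum_gap_le. Qed.

Lemma sum_powR_eq_tangent :
  \sum_(1 <= j < n.+1) y j `^ p <= \sum_(1 <= j < n.+1) x j `^ p ->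
  forall j, (1 <= j <= n)%N -> y j = x j.
Proof.
move=> le_yx j jn.
have : \sum_(1 <= i < n.+1 | (1 <= i < n.+1)%N) gap i == 0.
  rewrite -big_nat eq_le sum_gap_ge0 andbT (le_trans sum_gap_le) //.
  by rewrite subr_le0.
rewrite psumr_eq0 => [/allP/(_ j)|]; last exact: gap_ge0.
rewrite mem_index_iota ltnS jn => /(_ isT) /= /eqP.
apply: contra_eq => yx; rewrite gt_eqF // subr_gt0 powR_tangent_lt ?x_ge0 ?y_ge0 //.
by rewrite eq_sym.
Qed.

End PowerConvexity.

Lemma feasible_ge0 (R : realType) (h : nat -> R) np v (y : nat -> R) :
  feasible h np v y -> forall j, (1 <= j <= np)%N -> 0 <= y j.
Proof.
case=> y1_ge0 [y_nondecr _]; elim=> [//|[|j] IH] /andP[_ jnp] //.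
by apply: le_trans (y_nondecr j.+1 _); [apply: IH | ]; lia.
Qed.

Section OptimalSolution.
Variables (R : realType) (alpha v : R) (h : nat -> R) (np J : nat).
Hypotheses (alpha01 : 0 < alpha < 1) (v_ge0 : 0 <= v) (J_bounds : (1 <= J <= np)%N)
  (h_gt0 : forall j, (1 <= j <= np)%N -> 0 < h j)
  (J_before : forall k, (1 <= k < J)%N -> k%:R * h k.+1 <= psum h k)
  (J_stop : (J < np)%N -> psum h J <= J%:R * h J.+1)
  (tail_nondecr : forall j, (J < j < np)%N -> h j <= h j.+1).

Let S := psum h J.
Let q := alpha / (1 - alpha).
Let Y := Yval alpha v h np J.
Let ys := ystar alpha v h np J.

Let ystarE j : ys j = if (j <= J)%N then Y else (J%:R * h j / S) `^ q * Y.
Proof. by []. Qed.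

Let J_lt_np1 : (J.+1 <= np.+1)%N.
Proof. by case/andP: J_bounds. Qed.

Let S_gt0 : 0 < S.
Proof.
apply: lt_le_trans (h_gt0 (ltac:(lia) : (1 <= 1 <= np)%N)) _.
rewrite /S /psum big_ltn; last lia.
rewrite lerDl big_nat sumr_ge0 // => i /andP[i2 iJ]; apply/ltW/h_gt0; lia.
Qed.

Let q_gt0 : 0 < q.
Proof. by case/andP: alpha01 => a0 a1; rewrite divr_gt0 // subr_gt0. Qed.

Let tail_ge j : (J < j <= np)%N -> S <= J%:R * h j.
Proof.
move=> /andP[Jj jnp]; apply: le_trans (J_stop _) _; first lia.
rewrite ler_wpM2l // (_ : j = J.+1 + (j - J.+1))%N; last lia.
have : (J.+1 + (j - J.+1) <= np)%N by lia.
elim: (j - J.+1)%N => [|k IH] k_np; first by rewrite addn0.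
by rewrite addnS; apply: le_trans (IH _) (tail_nondecr _); lia.
Qed.

Let tail_base_ge1 j : (J < j <= np)%N -> 1 <= J%:R * h j / S.
Proof. by move=> jJ; rewrite ler_pdivlMr // mul1r tail_ge. Qed.

Let powR_q_ge1 b : 1 <= b -> 1 <= b `^ q.
Proof.
move=> b1; have b0 : 0 <= b := le_trans ler01 b1.
by have := ge0_ler_powR (ltW q_gt0) (ler01 : 0 <= 1) b0 b1; rewrite powR1.
Qed.

Let Y_ge0 : 0 <= Y.
Proof.
apply: divr_ge0; first by rewrite mulr_ge0 ?powR_ge0.
by rewrite addr_ge0 ?mulr_ge0 ?powR_ge0 // big_nat sumr_ge0 // => i _; apply: powR_ge0.
Qed.

Let ystar_ge0 j : 0 <= ys j.
Proof. by rewrite ystarE; case: ifP => // _; rewrite mulr_ge0 ?powR_ge0. Qed.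

Let ystar_nondecr j : (1 <= j < np)%N -> ys j <= ys j.+1.
Proof.
move=> /andP[j1 jnp]; rewrite !ystarE.
case: (leqP j.+1 J) => [jJ|Jj]; first by rewrite ifT //; lia.
case: (leqP j J) => [jJ|Jj']; [rewrite -{1}[Y]mul1r |]; apply: ler_wpM2r => //.
  by apply/powR_q_ge1/tail_base_ge1; lia.
rewrite ge0_ler_powR ?nnegrE ?(ltW q_gt0) ?(le_trans ler01) ?tail_base_ge1 //; try lia.
apply: ler_wpM2r; first by rewrite invr_ge0 ltW.
by apply: ler_wpM2l => //; apply: tail_nondecr; lia.
Qed.

Let ystar_constraint : \sum_(1 <= j < np.+1) h j * ys j = v.
Proof.
have [a0 a1] : 0 < alpha /\ alpha < 1 by apply/andP.
set T := \sum_(J.+1 <= j < np.+1) h j `^ (1 / (1 - alpha)).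
have r_eq : 1 / (1 - alpha) = q + 1 by rewrite /q; field; rewrite subr_eq0 gt_eqF.
have Sq_gt0 : 0 < S `^ q by rewrite powR_gt0.
have T_ge0 : 0 <= T by rewrite /T big_nat sumr_ge0 // => i _; apply: powR_ge0.
have head : \sum_(1 <= j < J.+1) h j * ys j = S * Y.
  rewrite /S /psum big_distrl; apply: eq_big_nat => j /andP[_ jJ].
  by rewrite ystarE ifT.
have tail : \sum_(J.+1 <= j < np.+1) h j * ys j = J%:R `^ q / S `^ q * T * Y.
  rewrite /T mulr_sumr big_distrl; apply: eq_big_nat => j /andP[Jj jnp] /=.
  have hj : 0 < h j by apply: h_gt0; lia.
  rewrite ystarE ifF; last lia.
  rewrite !powRM ?mulr_ge0 ?invr_ge0 ?(ltW hj) ?(ltW S_gt0) //.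
  rewrite -powR_inv1 ?(ltW S_gt0) // -powRrM mulN1r powRN.
  rewrite r_eq powRD ?powRr1 ?(gt_eqF hj) ?implybT //; [ring | exact: ltW].
rewrite (big_cat_nat _ J_lt_np1) //= head tail /Y /Yval -/S -/q -/T r_eq.
rewrite powRD ?powRr1 ?(gt_eqF S_gt0) ?implybT //; last exact: ltW.
by field; rewrite !gt_eqF // ltr_wpDr ?mulr_ge0 ?powR_ge0 // mulr_gt0.
Qed.

Let weight j := if (j <= J)%N then 1 else J%:R * h j / S.

Let ystar_powR_weight j : (j <= np)%N ->
  ys j `^ (1 / alpha - 1) = Y `^ (1 / alpha - 1) * weight j.
Proof.
move=> jnp; rewrite ystarE /weight; case: ifPn => [_|Jj]; first by rewrite mulr1.
have [a0 a1] : 0 < alpha /\ alpha < 1 by apply/andP.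
have qp : q * (1 / alpha - 1) = 1.
  by rewrite /q; field; rewrite subr_eq0 !gt_eqF.
have base_ge0 : 0 <= J%:R * h j / S.
  by rewrite divr_ge0 ?mulr_ge0 ?(ltW S_gt0) // ltW // h_gt0 //; lia.
by rewrite powRM ?powR_ge0 // -powRrM qp powRr1 // mulrC.
Qed.

Let abel_gap_ge0 (y : nat -> R) : (forall k, (1 <= k < J)%N -> y k <= y k.+1) ->
  0 <= \sum_(1 <= j < J.+1) (S - J%:R * h j) * (y j - Y).
Proof.
move=> y_nondecr.
have partial k : \sum_(1 <= j < k.+1) (S - J%:R * h j) = S *+ k - J%:R * psum h k.
  by rewrite sumrB sumr_const_nat subSS subn0 -mulr_sumr.
apply: le_trans (abel_summation_ler (d := fun j => y j - Y) _ _).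
- by rewrite partial -/S mulr_natl subrr mul0r.
- move=> k kJ; rewrite partial subr_le0 -(mulr_natl S).
  by apply: psum_avg_antitone => //; lia.
- by move=> k kJ; rewrite lerD2r y_nondecr.
Qed.

Let weighted_gapE (y : nat -> R) : \sum_(1 <= j < np.+1) h j * y j = v ->
  \sum_(1 <= j < np.+1) weight j * (y j - ys j) =
  S^-1 * \sum_(1 <= j < J.+1) (S - J%:R * h j) * (y j - Y).
Proof.
move=> y_sum.
have : \sum_(1 <= j < np.+1) h j * (y j - ys j) = 0.
  by under eq_bigr do rewrite mulrBr; rewrite sumrB y_sum ystar_constraint subrr.
rewrite (big_cat_nat _ J_lt_np1) //= => /eqP; rewrite addrC addr_eq0 => /eqP tailE.
rewrite (big_cat_nat _ J_lt_np1) //=.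
have -> : \sum_(1 <= j < J.+1) weight j * (y j - ys j) = \sum_(1 <= j < J.+1) (y j - Y).
  by apply: eq_big_nat => j /andP[_]; rewrite ltnS => jJ; rewrite /weight ystarE jJ mul1r.
have -> : \sum_(J.+1 <= j < np.+1) weight j * (y j - ys j) =
    J%:R / S * \sum_(J.+1 <= j < np.+1) h j * (y j - ys j).
  by rewrite mulr_sumr; apply: eq_big_nat => j /andP[Jj _]; rewrite /weight ifF; [ring | lia].
rewrite tailE mulrN !mulr_sumr -sumrN -big_split /=; apply: eq_big_nat => j /andP[_].
by rewrite ltnS => jJ; rewrite ystarE jJ; field; rewrite gt_eqF.
Qed.

Lemma ystar_first_order (y : nat -> R) : feasible h np v y ->
  0 <= \sum_(1 <= j < np.+1) ys j `^ (1 / alpha - 1) * (y j - ys j).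
Proof.
case=> _ [y_nondecr y_sum].
rewrite (@eq_big_nat _ _ _ 1 np.+1 _
  (fun j => Y `^ (1 / alpha - 1) * (weight j * (y j - ys j)))); last first.
  by move=> j /andP[_ jnp]; rewrite ystar_powR_weight ?mulrA.
rewrite -mulr_sumr weighted_gapE // mulr_ge0 ?powR_ge0 //.
rewrite mulr_ge0 ?invr_ge0 ?(ltW S_gt0) //.
by apply: abel_gap_ge0 => k kJ; apply: y_nondecr; lia.
Qed.

Lemma ystar_feasible : feasible h np v ys.
Proof.
by split; [exact: ystar_ge0 | split; [exact: ystar_nondecr | exact: ystar_constraint]].
Qed.

End OptimalSolution.

Theorem theorem1 (R : realType) (N np : nat) (alpha v : R) (W : R -> R) :
  0 < alpha < 1 -> (1 <= np <= N)%N ->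
  inverse_S_shaped W -> W 0 = 0 -> W 1 = 1 -> 0 <= v ->
  let h := hplus W N np in
  let J := transJ h np in
  let ys := ystar alpha v h np J in
  [/\ feasible h np v ys,
      forall y, feasible h np v y -> objective alpha np ys <= objective alpha np y
    & forall y, feasible h np v y -> objective alpha np y <= objective alpha np ys ->
        forall j, (1 <= j <= np)%N -> y j = ys j].
Proof.
move=> alpha01 /andP[np_gt0 np_le_N] W_S _ _ v_ge0 h J ys.
have h_gt0 := hplus_gt0 W_S np_le_N.
have J_bounds : (1 <= J <= np)%N := transJ_bounds h np_gt0.
have J_before k : (1 <= k < J)%N -> k%:R * h k.+1 <= psum h k.
  by move=> kJ; exact: ltW (transJ_before np_gt0 kJ).
have J_stop : (J < np)%N -> psum h J <= J%:R * h J.+1 := transJ_stop np_gt0.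
have tail_nondecr := transJ_tail_nondecr np_gt0 (hplus_descent W_S np_le_N).
have ys_feas : feasible h np v ys by apply: ystar_feasible.
have p_gt1 : 1 < 1 / alpha by case/andP: alpha01 => a0 a1; rewrite ltr_pdivlMr // mul1r.
have tangent y : feasible h np v y ->
    0 <= \sum_(1 <= j < np.+1) ys j `^ (1 / alpha - 1) * (y j - ys j).
  exact: ystar_first_order.
split=> // y y_feas.
- exact: sum_powR_ge_tangent p_gt1 (feasible_ge0 ys_feas) (feasible_ge0 y_feas)
    (tangent y y_feas).
- exact: sum_powR_eq_tangent p_gt1 (feasible_ge0 ys_feas) (feasible_ge0 y_feas)
    (tangent y y_feas).
Qed.
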